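(* In the quantum switch model of the context (with $W=\infty$), suppose the entanglement swapping success probability is $q=1$ and $(\lambda_{ij}+\epsilon)_{i,j\in\mathcal K}\in\Lambda$ for some $\epsilon>0$. Then the quantum switch is stable under any on-demand protocol $\pi_{\mathrm{od}}$.
   Context: Quantum switch model. There are $K$ end nodes $\mathcal K=\{1,\dots,K\}$ and a switch (node $0$); time is slotted, $t=0,1,2,\dots$; pair-indexed quantities are symmetric in $(i,j)$. In slot $t$: (i) $C_{0i}(t)\in\{0,1\}$ EPR pairs are generated between the switch and node $i$, where $\{C_{0i}(t)\}_{t\ge0}$ are mutually independent Bernoulli processes (i.i.d. in $t$) with mean $p_i$. (ii) The switch chooses nonnegative integers $F_{ij}(t)=F_{ji}(t)$ (entanglement swaps for pair $(i,j)$, each consuming one stored switch–$i$ and one stored switch–$j$ pair) with $\sum_iF_{ij}(t)\le E_{0j}(t)$; no limit on swaps per slot ($W=\infty$); each swap succeeds independently with probability $q$; $R_{ij}(t)$ is the number of successes. (iii) $A_{ij}(t)\in\mathbb N$ new requests for pair $(i,j)$ arrive. Dynamics: $U_{ij}(t+1)=[U_{ij}(t)-E_{ij}(t)-R_{ij}(t)]^++A_{ij}(t)$, $E_{ij}(t+1)=[E_{ij}(t)+R_{ij}(t)-U_{ij}(t)]^+$, $E_{0i}(t+1)=E_{0i}(t)-\sum_jF_{ij}(t)+C_{0i}(t)$, with zero initial values; $U_{ij}$ = pending requests, $E_{ij}$ = stored $i$–$j$ pairs, $E_{0i}$ = stored switch–$i$ pairs; memory unlimited, no decoherence. Requests: $\{A_{ij}(t)\}_t$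 mutually independent across pairs, each stationary ergodic with rate $\lambda_{ij}$ (so $\frac1t\sum_{\tau<t}A_{ij}(\tau)\to\lambda_{ij}$ a.s.), and $\mathbb E[A_{ij}(t)^2\mid H(t)=h]\le A_{\max}^2$ for every $t,i,j$ and realization $h$ of the history $H(t)=(E_{ij}(\tau),U_{ij}(\tau),A_{ij}(\tau),R_{ij}(\tau),C_{0i}(\tau))_{\tau=0}^{t-1}$. Stability: for all $i,j$, $\limsup_{t\to\infty}\frac1t\sum_{\tau=0}^{t-1}\mathbb P[U_{ij}(\tau)>V]\to0$ as $V\to\infty$. $\Lambda$ is the set of nonnegative matrices $(\lambda_{ij})$ for which there exist nonnegative $f_{ij}=f_{ji}$ with $\sum_if_{ij}\le p_j$ for all $j$ and $\lambda_{ij}\le qf_{ij}$ for all $i,j$. On-demand protocols: a protocol is on-demand if in every slot $t$ its choices $F_{ij}=F_{ij}(t)$ satisfy $\sum_{i\in\mathcal K}F_{ij}\le E_{0j}(t)$ for all $j$; $F_{ij}\le U_{ij}(t)$ for all $i,j$; $F_{ij}=F_{ji}\in\mathbb N$; and $\big(E_{0i}(t)-\sum_kF_{ik}\big)\big(E_{0j}(t)-\sum_kF_{kj}\big)\big(U_{ij}(t)-F_{ij}\big)=0$ for all $i,j$ (any choice satisfying these may be used). *)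

From HB Require Import structures.
From mathcomp Require Import all_boot all_order all_algebra.
From mathcomp Require Import all_classical all_reals all_analysis.
Set Implicit Arguments. Unset Strict Implicit. Unset Printing Implicit Defensive.
Import Order.TTheory GRing.Theory Num.Theory.
Local Open Scope classical_set_scope.
Local Open Scope ring_scope.

(* Deterministic sample-path dynamics of the quantum switch, q = 1     *)
(* (so R_ij(t) = F_ij(t)).  Nodes are 'I_K.                           *)
(*   c t i       = C_{0i}(t)                                          *)
(*   a t i j     = A_{ij}(t)                                          *)
(*   f t i j     = F_{ij}(t)                                          *)
(* A state is (E_0, U, E).  Nat subtraction is truncated, i.e. [.]^+.  *)
Definition sw_state (K : nat) :=
  (('I_K -> nat) * ('I_K -> 'I_K -> nat) * ('I_K -> 'I_K -> nat))%type.

Definition sw_E0 K (s : sw_state K) := s.1.1.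
Definition sw_U K (s : sw_state K) := s.1.2.
Definition sw_E K (s : sw_state K) := s.2.

Fixpoint sw_path (K : nat) (c : nat -> 'I_K -> nat)
    (a : nat -> 'I_K -> 'I_K -> nat) (f : nat -> 'I_K -> 'I_K -> nat)
    (t : nat) : sw_state K :=
  match t with
  | 0 => (fun _ => 0%N, fun _ _ => 0%N, fun _ _ => 0%N)
  | t'.+1 =>
    let s := sw_path c a f t' in
    ((fun i => (sw_E0 s i - \sum_(j < K) f t' i j + c t' i)%N,
      fun i j => (sw_U s i j - sw_E s i j - f t' i j + a t' i j)%N),
     fun i j => (sw_E s i j + f t' i j - sw_U s i j)%N)
  end.

Definition on_demand K (s : sw_state K) (F : 'I_K -> 'I_K -> nat) : Prop :=
  [/\ forall j, (\sum_(i < K) F i j <= sw_E0 s j)%N,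
      forall i j, (F i j <= sw_U s i j)%N,
      forall i j, F i j = F j i &
      forall i j, ((sw_E0 s i - \sum_(k < K) F i k) *
                   (sw_E0 s j - \sum_(k < K) F k j) *
                   (sw_U s i j - F i j))%N = 0%N].

Definition in_Lambda (R : realType) K (q : R) (p : 'I_K -> R)
    (lam : 'I_K -> 'I_K -> R) : Prop :=
  exists f : 'I_K -> 'I_K -> R,
    [/\ forall i j, 0 <= f i j,
        forall i j, f i j = f j i,
        forall j, \sum_(i < K) f i j <= p j &
        forall i j, lam i j <= q * f i j].

Section Prob.
Context (d : measure_display) (T : measurableType d) (R : realType)
        (P : probability T R).

Definition nat_rv (X : T -> nat) : Prop := forall n : nat, measurable (X @^-1` [set n]).

Definition mutual_indep (I : eqType) (adm : I -> bool) (G : I -> set (set T)) : Prop :=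
  forall (ks : seq I) (Es : I -> set T),
    uniq ks -> all adm ks -> (forall k, k \in ks -> G k (Es k)) ->
    P (\bigcap_(k in [set k | k \in ks]) Es k) = (\prod_(k <- ks) P (Es k))%E.

Definition rv_events (X : T -> nat) : set (set T) :=
  [set E | exists S : set nat, E = X @^-1` S].

(* Events determined by finitely many time steps of a nat-valued process
   (a pi-system generating its sigma-field). *)
Definition proc_events (X : T -> nat -> nat) : set (set T) :=
  [set E | exists (n : nat) (S : set ('I_n -> nat)),
     E = [set w | S (fun m : 'I_n => X w m)]].

Definition fam_events (J : Type) (X : J -> T -> nat -> nat) : set (set T) :=
  [set E | exists (n : nat) (S : set (J -> 'I_n -> nat)),
     E = [set w | S (fun (k : J) (m : 'I_n) => X k w m)]].

Definition stationary (X : T -> nat -> nat) : Prop :=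
  forall (n s : nat) (S : set ('I_n -> nat)),
    P [set w | S (fun m : 'I_n => X w (s + m)%N)] =
    P [set w | S (fun m : 'I_n => X w m)].

Definition ergodic (X : T -> nat -> nat) : Prop :=
  forall S : set (nat -> nat),
    (forall x, S x <-> S (fun m => x m.+1)) ->
    measurable [set w | S (X w)] ->
    P [set w | S (X w)] = 0%E \/ P [set w | S (X w)] = 1%E.

End Prob.

Section Prob2.
Context (d : measure_display) (T : measurableType d) (R : realType)
        (P : probability T R).
Local Open Scope ereal_scope.

(* w and w' have the same history H(t) = (E_ij, U_ij, A_ij, R_ij, C_0i)(tau),
   tau < t, where R = F since q = 1. *)
Definition same_history (K : nat) (C : T -> nat -> 'I_K -> nat)
    (A F : T -> nat -> 'I_K -> 'I_K -> nat) (t : nat) (w w' : T) : Prop :=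
  forall tau : nat, (tau < t)%N ->
    (forall i, C w tau i = C w' tau i) /\
    (forall i j,
       [/\ A w tau i j = A w' tau i j,
           F w tau i j = F w' tau i j,
           sw_U (sw_path (C w) (A w) (F w) tau) i j =
             sw_U (sw_path (C w') (A w') (F w') tau) i j &
           sw_E (sw_path (C w) (A w) (F w) tau) i j =
             sw_E (sw_path (C w') (A w') (F w') tau) i j]).

Definition stable_queue (U : T -> nat -> nat) : Prop :=
  (fun V : R => limn_esup (fun n : nat =>
      ((n%:R)^-1)%:E * \sum_(tau < n) P [set w | (V < (U w tau)%:R)%R]))
    x @[x --> +oo%R] --> 0.

End Prob2.

Import numFieldNormedType.Exports.
Definition avg_cvg_to (R : realType) (a : nat -> nat) (l : R) : Prop :=
  ((t%:R)^-1 * \sum_(tau < t) (a tau)%:R) @[t --> \oo] --> l.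

(* With q = 1 an on-demand switch never stores end-to-end pairs, and a request
   for (i, j) can stay pending only if the stored switch pairs of i or of j
   are exhausted.  Since every swap involving node k answers a request
   involving k, this cannot happen while both i and j have received more
   switch pairs than requests; then U_ij(t+1) = A_ij(t).  With the capacity
   slack, the generation at node k falls below (p_k - eps/2) t with
   probability O(1/t) (second moment of the pairwise independent Bernoulli
   generation), and the demand exceeds it with vanishing probability (ergodic
   averages).  Hence P[U_ij(t) > V] <= beta_t + P[A_ij(0) > V] with
   beta_t -> 0 and stationary requests, and the Cesaro means give
   limsup <= P[A_ij(0) > V], which vanishes as V -> oo. *)

From mathcomp Require Import all_boot all_order all_algebra.
From mathcomp Require Import all_classical all_reals all_analysis measurable_realfun.
From mathcomp Require Import ring lra zify.
Set Implicit Arguments. Unset Strict Implicit. Unset Printing Implicit Defensive.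
Import Order.TTheory GRing.Theory Num.Theory.
Import numFieldNormedType.Exports.
Local Open Scope classical_set_scope.
Local Open Scope ring_scope.

(** * Sample paths of an on-demand switch *)

Definition cum_generated K (c : nat -> 'I_K -> nat) (t : nat) (k : 'I_K) : nat :=
  \sum_(tau < t) c tau k.

Definition cum_requests K (a : nat -> 'I_K -> 'I_K -> nat) (t : nat) (k : 'I_K) : nat :=
  \sum_(tau < t) \sum_(m < K) a tau k m.

Section OnDemandPath.
Variables (K : nat) (c : nat -> 'I_K -> nat) (a f : nat -> 'I_K -> 'I_K -> nat).
Hypothesis f_on_demand : forall t, on_demand (sw_path c a f t) (f t).
Local Notation st t := (sw_path c a f t).

Lemma sw_E_eq0 t i j : sw_E (st t) i j = 0%N.
Proof.
elim: t i j => [//|t IH] i j.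
have [_ fU _ _] := f_on_demand t.
by rewrite /sw_E /= -/(sw_E _) IH; have := fU i j; lia.
Qed.

Lemma sw_U_balance t i j :
  (sw_U (st t) i j + \sum_(tau < t) f tau i j = \sum_(tau < t) a tau i j)%N.
Proof.
elim: t => [|t IH]; first by rewrite !big_ord0.
have [_ fU _ _] := f_on_demand t.
move: IH (fU i j); rewrite /sw_U /= -/(sw_U _) -/(sw_E _) sw_E_eq0.
rewrite !big_ord_recr /=; lia.
Qed.

Lemma sw_E0_balance t i :
  (sw_E0 (st t) i + \sum_(tau < t) \sum_(m < K) f tau i m = cum_generated c t i)%N.
Proof.
elim: t => [|t IH]; first by rewrite /cum_generated !big_ord0.
have [f_col _ f_sym _] := f_on_demand t.
have f_row : (\sum_(m < K) f t i m <= sw_E0 (st t) i)%N.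
  by under eq_bigr do rewrite f_sym; exact: f_col.
move: IH f_row; rewrite /sw_E0 /cum_generated /= -/(sw_E0 _) !big_ord_recr /=; lia.
Qed.

Lemma sw_E0_residual_gt0 t i : (cum_requests a t i < cum_generated c t i)%N ->
  (0 < sw_E0 (st t) i - \sum_(m < K) f t i m)%N.
Proof.
move=> req_lt_gen.
have swaps_le : (\sum_(tau < t.+1) \sum_(m < K) f tau i m <= cum_requests a t i)%N.
  rewrite /cum_requests exchange_big [leqRHS]exchange_big /=.
  apply: leq_sum => m _; have [_ fU _ _] := f_on_demand t.
  by rewrite big_ord_recr /= -(sw_U_balance t i m) addnC leq_add2r fU.
by move: req_lt_gen swaps_le (sw_E0_balance t i); rewrite big_ord_recr /=; lia.
Qed.

Lemma sw_U_served t i j :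
  (cum_requests a t i < cum_generated c t i)%N ->
  (cum_requests a t j < cum_generated c t j)%N ->
  sw_U (st t.+1) i j = a t i j.
Proof.
move=> /sw_E0_residual_gt0 res_i /sw_E0_residual_gt0 res_j.
have [_ fU f_sym f_full] := f_on_demand t.
have served : sw_U (st t) i j = f t i j.
  have := f_full i j; under [X in (_ * (_ - X) * _)%N]eq_bigr do rewrite -f_sym.
  move/eqP; rewrite !muln_eq0 !eqn0Ngt res_i res_j /= -eqn0Ngt subn_eq0 => U_le.
  by apply/eqP; rewrite eqn_leq U_le fU.
by rewrite /sw_U /= -/(sw_U _) -/(sw_E _) sw_E_eq0 served subn0 subnn.
Qed.

End OnDemandPath.

(** * Nat-valued random variables and probabilities *)

Section NatRV.
Context (d : measure_display) (T : measurableType d).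

Lemma measurable_cst_set (Q : Prop) : measurable [set _ : T | Q].
Proof.
have [q|nq] := pselect Q.
  by rewrite (_ : [set _ | Q] = setT) //; apply/seteqP; split.
by rewrite (_ : [set _ | Q] = set0) //; apply/seteqP; split.
Qed.

Lemma nat_rv_measurable (X : T -> nat) (Q : nat -> Prop) :
  nat_rv X -> measurable [set w | Q (X w)].
Proof.
move=> mX.
have -> : [set w | Q (X w)] = \bigcup_n (X @^-1` [set n] `&` [set _ | Q n]).
  by apply/seteqP; split => [w Qw | w [n _ [/= -> //]]]; exists (X w).
by apply: bigcupT_measurable => n; apply: measurableI; [exact: mX | exact: measurable_cst_set].
Qed.

Lemma nat_rv_cst (n : nat) : nat_rv (fun _ : T => n).
Proof. by move=> m; exact: measurable_cst_set. Qed.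

Lemma nat_rv_map2 (g : nat -> nat -> nat) (X Y : T -> nat) :
  nat_rv X -> nat_rv Y -> nat_rv (fun w => g (X w) (Y w)).
Proof.
move=> mX mY n.
have -> : (fun w => g (X w) (Y w)) @^-1` [set n] =
    \bigcup_x (X @^-1` [set x] `&` [set w | g x (Y w) = n]).
  by apply/seteqP; split => [w gn | w [x _ [/= -> //]]]; exists (X w).
apply: bigcupT_measurable => x; apply: measurableI; first exact: mX.
exact: (nat_rv_measurable (fun y => g x y = n) mY).
Qed.

Lemma nat_rv_sum (I : Type) (s : seq I) (X : I -> T -> nat) :
  (forall k, nat_rv (X k)) -> nat_rv (fun w => \sum_(k <- s) X k w)%N.
Proof.
move=> mX; elim: s => [|k s IH].
  by under [fun w => _]funext do rewrite big_nil; exact: nat_rv_cst.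
by under [fun w => _]funext do rewrite big_cons; exact: nat_rv_map2.
Qed.

Lemma nat_rv_sw_path K (C : T -> nat -> 'I_K -> nat) (A F : T -> nat -> 'I_K -> 'I_K -> nat) :
  (forall t i, nat_rv (fun w => C w t i)) ->
  (forall t i j, nat_rv (fun w => A w t i j)) ->
  (forall t i j, nat_rv (fun w => F w t i j)) ->
  forall t,
  [/\ forall i, nat_rv (fun w => sw_E0 (sw_path (C w) (A w) (F w) t) i),
      forall i j, nat_rv (fun w => sw_U (sw_path (C w) (A w) (F w) t) i j) &
      forall i j, nat_rv (fun w => sw_E (sw_path (C w) (A w) (F w) t) i j)].
Proof.
move=> mC mA mF; elim=> [|t [mE0 mU mE]]; first by split=> *; exact: nat_rv_cst.
split=> *; rewrite /sw_E0 /sw_U /sw_E /=.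
- by apply: (nat_rv_map2 addn) => //; apply: (nat_rv_map2 subn) => //; exact: nat_rv_sum.
- apply: (nat_rv_map2 addn) => //; apply: (nat_rv_map2 subn) => //.
  exact: (nat_rv_map2 subn).
- by apply: (nat_rv_map2 subn) => //; apply: (nat_rv_map2 addn).
Qed.

End NatRV.

Section ProbabilityFacts.
Context (d : measure_display) (T : measurableType d) (R : realType) (P : probability T R).

Lemma probability_fineK (S : set T) : measurable S -> (fine (P S))%:E = P S.
Proof.
move=> mS; rewrite fineK // ge0_fin_numE //.
exact: le_lt_trans (probability_le1 P mS) (ltey _).
Qed.

Lemma fine_probability_ge0 (S : set T) : 0 <= fine (P S).
Proof. exact: fine_ge0. Qed.

Lemma fine_probability_le1 (S : set T) : measurable S -> fine (P S) <= 1.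
Proof. by move=> mS; rewrite -lee_fin probability_fineK // probability_le1. Qed.

Lemma le_fine_probability (S1 S2 : set T) :
  measurable S1 -> measurable S2 -> S1 `<=` S2 -> fine (P S1) <= fine (P S2).
Proof. by move=> mS1 mS2 S12; rewrite -lee_fin !probability_fineK // le_measure ?inE. Qed.

Lemma fine_probability_setU (S1 S2 : set T) : measurable S1 -> measurable S2 ->
  fine (P (S1 `|` S2)) <= fine (P S1) + fine (P S2).
Proof.
move=> mS1 mS2; rewrite -lee_fin EFinD !probability_fineK //; last exact: measurableU.
exact: measureU2.
Qed.

Lemma fine_probability_bigcap_cvg (E : (set T)^nat) :
  (forall n, measurable (E n)) -> nonincreasing_seq E ->
  fine (P (E n)) @[n --> \oo] --> fine (P (\bigcap_n E n)).
Proof.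
move=> mE E_noninc; apply: fine_cvg; rewrite fineK; last first.
  by rewrite ge0_fin_numE // (le_lt_trans (probability_le1 P (bigcapT_measurable mE)) (ltey _)).
apply: nonincreasing_cvg_mu => //; last exact: bigcapT_measurable.
exact: le_lt_trans (probability_le1 P (mE 0%N)) (ltey _).
Qed.

Lemma mutual_indep2 (I : eqType) (adm : I -> bool) (G : I -> set (set T))
    (k1 k2 : I) (E1 E2 : set T) :
  mutual_indep P adm G -> k1 != k2 -> adm k1 -> adm k2 -> G k1 E1 -> G k2 E2 ->
  P (E1 `&` E2) = (P E1 * P E2)%E.
Proof.
move=> indep k12 adm1 adm2 G1 G2.
pose Es k := if k == k1 then E1 else E2.
have k21 : (k2 == k1) = false by rewrite eq_sym; exact: negbTE.
have capE : \bigcap_(k in [set k | k \in [:: k1; k2]]) Es k = E1 `&` E2.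
  apply/seteqP; split=> [w Ew | w [E1w E2w] k].
    by split; [have := Ew k1 | have := Ew k2]; rewrite /Es ?k21 ?eqxx; apply;
      rewrite /= !inE eqxx ?orbT.
  by move=> /=; rewrite !inE => /orP[] /eqP ->; rewrite /Es ?k21 ?eqxx.
rewrite -capE indep /= ?inE ?k12 ?adm1 ?adm2 //.
  by rewrite !big_cons big_nil mule1 /Es k21 eqxx.
by move=> k; rewrite !inE => /orP[] /eqP ->; rewrite /Es ?k21 ?eqxx.
Qed.

Lemma stationary_prob (X : T -> nat -> nat) (Q : nat -> Prop) (t : nat) :
  stationary P X -> P [set w | Q (X w t)] = P [set w | Q (X w 0%N)].
Proof.
move=> X_stat; have := X_stat 1%N t [set x | Q (x ord0)].
by under [[set w | _]]eq_fun do rewrite /= addn0.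
Qed.

End ProbabilityFacts.

(** * Tail estimates *)

Lemma sqr_dev_lower_tail (R : realFieldType) (x y e : R) (b : bool) :
  0 <= e -> (b -> x <= y - e) -> e ^+ 2 * b%:R + 2 * y * x <= x ^+ 2 + y ^+ 2.
Proof.
move=> e_ge0; case: b => [/(_ isT) x_le | _]; last first.
  by rewrite mulr0 add0r; have := sqr_ge0 (y - x); nra.
by rewrite mulr1; nra.
Qed.

Section IndicatorSums.
Context (d : measure_display) (T : measurableType d) (R : realType) (P : probability T R).

Lemma integral_sum_indic (I : Type) (s : seq I) (c : I -> R) (B : I -> set T) :
  (forall x, 0 <= c x) -> (forall x, measurable (B x)) ->
  (\int[P]_w (\sum_(x <- s) c x * \1_(B x) w)%:E =
   (\sum_(x <- s) c x * fine (P (B x)))%:E)%E.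
Proof.
move=> c_ge0 mB; under eq_integral do rewrite -sumEFin.
rewrite ge0_integral_sum //; last first.
- by move=> x w _; rewrite lee_fin mulr_ge0.
- by move=> x; apply/measurable_EFinP/measurable_funM => //; exact: measurable_indic.
rewrite -sumEFin; apply: eq_bigr => x _.
rewrite (@integralZl_indic _ _ _ _ _ measurableT (fun _ => B x) (c x)) //; last first.
  by rewrite ltNge c_ge0.
by rewrite integral_indic // setIT EFinM probability_fineK.
Qed.

Lemma le_sum_indic_probability (I1 I2 : Type) (s1 : seq I1) (s2 : seq I2)
    (c1 : I1 -> R) (c2 : I2 -> R) (B1 : I1 -> set T) (B2 : I2 -> set T) :
  (forall x, 0 <= c1 x) -> (forall x, 0 <= c2 x) ->
  (forall x, measurable (B1 x)) -> (forall x, measurable (B2 x)) ->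
  (forall w, \sum_(x <- s1) c1 x * \1_(B1 x) w <= \sum_(x <- s2) c2 x * \1_(B2 x) w) ->
  \sum_(x <- s1) c1 x * fine (P (B1 x)) <= \sum_(x <- s2) c2 x * fine (P (B2 x)).
Proof.
move=> c1_ge0 c2_ge0 mB1 mB2 le12.
rewrite -lee_fin -(integral_sum_indic s1) // -(integral_sum_indic s2) //.
apply: ge0_le_integral => //.
- by move=> w _; rewrite lee_fin; apply: sumr_ge0 => x _; rewrite mulr_ge0.
- apply/measurable_EFinP; apply: measurable_sum => x.
  by apply: measurable_funM => //; exact: measurable_indic.
- apply/measurable_EFinP; apply: measurable_sum => x.
  by apply: measurable_funM => //; exact: measurable_indic.
- by move=> w _; rewrite lee_fin.
Qed.

Lemma sum_probability_setI_le (S : nat -> set T) (p : R) (t : nat) :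
  (forall tau, P (S tau) = p%:E) ->
  (forall tau tau', tau <> tau' -> P (S tau `&` S tau') = (p * p)%:E) ->
  \sum_(a < t) \sum_(b < t) fine (P (S a `&` S b)) <= t%:R * p + t%:R ^+ 2 * (p * p).
Proof.
move=> PS PS2.
have -> : t%:R * p + t%:R ^+ 2 * (p * p) = \sum_(a < t) (p + \sum_(b < t) p * p).
  by rewrite big_split /= !sumr_const card_ord; ring.
apply: ler_sum => a _; rewrite (bigD1 a) //= setIid PS lerD2l.
rewrite [leRHS](bigD1 a) //= -[leLHS]add0r lerD //; first by rewrite -expr2 sqr_ge0.
apply: ler_sum => b ab; rewrite PS2 // => /val_inj ba.
by move: ab; rewrite ba eqxx.
Qed.

End IndicatorSums.

Section BernoulliSums.
Context (d : measure_display) (T : measurableType d) (R : realType) (P : probability T R).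
Variables (X : nat -> T -> nat) (p : R).
Hypotheses (X_le1 : forall tau w, (X tau w <= 1)%N) (mX : forall tau, nat_rv (X tau))
  (PX : forall tau, P [set w | X tau w = 1%N] = p%:E)
  (PX2 : forall tau tau', tau <> tau' ->
     P ([set w | X tau w = 1%N] `&` [set w | X tau' w = 1%N]) = (p * p)%:E).

Let S tau := [set w | X tau w = 1%N].

Let p_ge0 : 0 <= p.
Proof. by rewrite -[p]/(fine p%:E) -(PX 0%N) fine_probability_ge0. Qed.

Let p_le1 : p <= 1.
Proof. by rewrite -[p]/(fine p%:E) -(PX 0%N); apply: fine_probability_le1; exact: mX. Qed.

Let natr_sum_indic t w : (\sum_(tau < t) X tau w)%:R = \sum_(tau < t) \1_(S tau) w :> R.
Proof.
rewrite natr_sum; apply: eq_bigr => tau _; rewrite indicE /S.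
have := X_le1 tau w; case Xw : (X tau w) => [|[|]] // _.
  by rewrite memNset //= Xw.
by rewrite mem_set //= Xw.
Qed.

Lemma bernoulli_sum_second_moment (e : R) (t : nat) : 0 <= e ->
  (e * t%:R) ^+ 2 * fine (P [set w | (\sum_(tau < t) X tau w)%:R <= (p - e) * t%:R])
    <= t%:R * p.
Proof.
move=> e_ge0; set B := [set w | _ <= _].
have mB : measurable B :=
  nat_rv_measurable (fun n => n%:R <= (p - e) * t%:R) (nat_rv_sum _ (fun tau : 'I_t => mX tau)).
(* Integrate (e t)^2 1_B + 2 p t N <= N^2 + (p t)^2, where N is the sum; the
   [None] summands carry 1_B and the constant. *)
pose s1 := None :: map Some (index_enum 'I_t).
pose c1 (x : option 'I_t) := if x is Some _ then 2 * p * t%:R else (e * t%:R) ^+ 2.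
pose B1 (x : option 'I_t) := if x is Some tau then S tau else B.
pose s2 := None :: [seq Some (a, b) | a <- index_enum 'I_t, b <- index_enum 'I_t].
pose c2 (x : option ('I_t * 'I_t)) := if x is Some _ then 1 else (p * t%:R) ^+ 2.
pose B2 (x : option ('I_t * 'I_t)) := if x is Some ab then S ab.1 `&` S ab.2 else setT.
have : \sum_(x <- s1) c1 x * fine (P (B1 x)) <= \sum_(x <- s2) c2 x * fine (P (B2 x)).
  apply: le_sum_indic_probability.
  - by case=> [?|]; rewrite ?sqr_ge0 // !mulr_ge0.
  - by case=> [?|]; rewrite ?sqr_ge0.
  - by case=> [tau|] //; exact: mX.
  - by case=> [[a b]|] //=; apply: measurableI; exact: mX.
  move=> w; rewrite !big_cons big_map big_allpairs_dep /= indicT mulr1 indicE.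
  have -> : \sum_(a < t) \sum_(b < t) 1 * \1_(S a `&` S b) w =
      (\sum_(tau < t) X tau w)%:R ^+ 2 :> R.
    rewrite natr_sum_indic expr2 big_distrlr /=.
    by apply: eq_bigr => a _; apply: eq_bigr => b _; rewrite mul1r indicI.
  rewrite -mulr_sumr -natr_sum_indic -(mulrA 2) [leRHS]addrC.
  by apply: sqr_dev_lower_tail; [exact: mulr_ge0 | rewrite inE -mulrBl; apply].
rewrite !big_cons big_map big_allpairs_dep /= probability_setT mulr1.
under eq_bigr do rewrite PX /=.
under [X in _ <= _ + X]eq_bigr do under eq_bigr do rewrite mul1r.
rewrite sumr_const card_ord -mulr_natl => moment.
have := @sum_probability_setI_le _ _ _ P S p t PX PX2; nra.
Qed.

Lemma bernoulli_sum_lower_tail (e : R) (t : nat) : 0 < e -> (0 < t)%N ->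
  fine (P [set w | (\sum_(tau < t) X tau w)%:R <= (p - e) * t%:R])
    <= (e ^+ 2 * t%:R)^-1.
Proof.
move=> e_gt0 t_gt0; have t_pos : 0 < t%:R :> R by rewrite ltr0n.
have := bernoulli_sum_second_moment t (ltW e_gt0); set PB := fine _ => PB_le.
rewrite -[leRHS]div1r ler_pdivlMr ?mulr_gt0 ?exprn_gt0 // -(ler_pM2l t_pos) mulr1.
have -> : t%:R * (PB * (e ^+ 2 * t%:R)) = (e * t%:R) ^+ 2 * PB by ring.
by apply: le_trans PB_le _; rewrite ler_piMr // ltW.
Qed.

Lemma bernoulli_sum_lower_tail_cvg0 (e : R) : 0 < e ->
  fine (P [set w | (\sum_(tau < t) X tau w)%:R <= (p - e) * t%:R]) @[t --> \oo] --> 0.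
Proof.
move=> e_gt0.
apply: (@squeeze_cvgr _ _ _ _ (cst 0) (fun t : nat => (e ^+ 2)^-1 * t%:R^-1)).
- exists 1%N => // t /= t_gt0; rewrite fine_probability_ge0 -invfM.
  exact: bernoulli_sum_lower_tail.
- exact: cvg_cst.
rewrite -(mulr0 (e ^+ 2)^-1); apply: cvgM; first exact: cvg_cst.
by rewrite -cvg_shiftS; exact: cvg_harmonic.
Qed.

End BernoulliSums.

Section Tails.
Context (d : measure_display) (T : measurableType d) (R : realType) (P : probability T R).

Lemma nat_rv_tail_cvg0 (Z : T -> nat) : nat_rv Z ->
  fine (P [set w | V < (Z w)%:R :> R]) @[V --> +oo] --> 0.
Proof.
move=> mZ; pose E n := [set w | n%:R < (Z w)%:R :> R].
have E_cvg : fine (P (E n)) @[n --> \oo] --> 0.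
  have E_cap : \bigcap_n E n = set0.
    by apply/seteqP; split=> // w /(_ (Z w) I); rewrite /E /= ltxx.
  rewrite -[0]/(fine 0%E) -(measure0 P) -E_cap.
  apply: fine_probability_bigcap_cvg => [n|n m nm].
    exact: (nat_rv_measurable (fun k => n%:R < k%:R) mZ).
  by apply/subsetPset => w; apply: le_lt_trans; rewrite ler_nat.
apply/cvgrPdist_le => e e_gt0; have /cvgrPdist_le/(_ e e_gt0) [N _ EN] := E_cvg.
exists N%:R; split=> [|V NV]; first exact: num_real.
apply: le_trans (EN N (leqnn N)); rewrite !sub0r !normrN !ger0_norm ?fine_probability_ge0 //.
apply: le_fine_probability; first exact: (nat_rv_measurable (fun k => V < k%:R) mZ).
  exact: (nat_rv_measurable (fun k => N%:R < k%:R) mZ).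
by move=> w /=; apply: lt_trans.
Qed.

Lemma ae_avg_tail_cvg0 (a : T -> nat -> nat) (L c : R) :
  L < c -> (forall t, nat_rv (fun w => a w t)) -> {ae P, forall w, avg_cvg_to (a w) L} ->
  fine (P [set w | c * t%:R < (\sum_(tau < t) a w tau)%:R]) @[t --> \oo] --> 0.
Proof.
move=> Lc ma [N [mN PN0 N_ae]].
pose D s := [set w | c * s%:R < (\sum_(tau < s) a w tau)%:R].
have mD s : measurable (D s) :=
  nat_rv_measurable (fun k => c * s%:R < k%:R) (nat_rv_sum _ (fun tau : 'I_s => ma tau)).
pose E t := \bigcup_(s in [set s | (t <= s)%N]) D s.
have mE t : measurable (E t) by apply: bigcup_measurable => s _.
(* where the average converges, [D s] occurs only finitely often *)
have E_cap : \bigcap_t E t `<=` N.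
  move=> w Ew; apply: N_ae => /= /cvgr_lt/(_ c Lc) [s0 _ avg_lt].
  have [s /= s0_lt_s] := Ew s0.+1 I; rewrite /D /= natr_sum => exceed.
  have := avg_lt s (ltnW s0_lt_s); rewrite /= ltr_pdivrMl ?ltr0n ?(leq_trans _ s0_lt_s) //.
  by rewrite mulrC ltNge (ltW exceed).
have E_cvg : fine (P (E t)) @[t --> \oo] --> 0.
  have : P (\bigcap_t E t) = 0%E.
    apply/eqP; rewrite eq_le measure_ge0 andbT -PN0 le_measure ?inE //.
    exact: bigcapT_measurable.
  move=> /(congr1 fine) /= <-; apply: fine_probability_bigcap_cvg => // n m nm.
  by apply/subsetPset => w [s /= ms Ds]; exists s => //=; exact: leq_trans ms.
apply: (squeeze_cvgr _ (cvg_cst 0) E_cvg); apply: nearW => t.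
rewrite fine_probability_ge0 /=; apply: le_fine_probability (mD t) (mE t) _.
by move=> w Dw; exists t => /=.
Qed.

Lemma ae_avg_cvg_to_sum (I : finType) (a : I -> T -> nat -> nat) (l : I -> R) :
  (forall m, {ae P, forall w, avg_cvg_to (a m w) (l m)}) ->
  {ae P, forall w, avg_cvg_to (fun t => \sum_m a m w t)%N (\sum_m l m)}.
Proof.
move=> a_avg; have ae_filter := ae_filter_ringOfSetsType P.
apply: filterS (filter_forall _ a_avg) => w avg_w.
rewrite /avg_cvg_to (_ : (fun t : nat => _) =
    fun t => \sum_m ((t%:R)^-1 * \sum_(tau < t) (a m w tau)%:R)); last first.
  apply/funext => t; rewrite -mulr_sumr exchange_big /=.
  by under eq_bigr do rewrite natr_sum.
by apply: cvg_big => // [|m _]; [exact: add_continuous | exact: avg_w].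
Qed.

End Tails.

(** * Stability *)

Lemma le_limn_esup (R : realType) (u v : (\bar R)^nat) :
  (forall n, (u n <= v n)%E) -> (limn_esup u <= limn_esup v)%E.
Proof.
move=> uv; rewrite !limn_esup_lim; apply: lee_lim; try exact: is_cvg_esups.
apply: nearW => n; apply: ge_ereal_sup => _ [k nk <-].
by apply: le_trans (uv k) _; apply: ereal_sup_ubound; exists k.
Qed.

Lemma limn_esup_mean_cvg0 (R : realType) (u : R -> nat -> R) (b : R^nat) (g : R -> R) :
  (forall V n, 0 <= u V n) -> (forall V n, 0 <= V -> u V n <= b n + g V) ->
  b n @[n --> \oo] --> 0 -> g V @[V --> +oo] --> 0 ->
  limn_esup (fun n => ((n%:R)^-1 * \sum_(tau < n) u V tau)%:E) @[V --> +oo] --> 0%E.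
Proof.
move=> u_ge0 u_le b_cvg g_cvg.
apply: (@squeeze_cvge _ _ _ _ (cst 0%E) _ (fun V => (g V)%:E)); last 2 first.
- exact: cvg_cst.
- by apply: cvg_EFin g_cvg; exact: nearW.
exists 0; split=> [|V V_gt0]; first exact: num_real.
apply/andP; split.
  rewrite -(cvg_limn_einf_sup (cvg_cst 0%E)).2; apply: le_limn_esup => n.
  by rewrite lee_fin mulr_ge0 ?invr_ge0 // sumr_ge0.
pose m n := (n%:R)^-1 * \sum_(tau < n) (b tau + g V).
have m_cvg : m n @[n --> \oo] --> g V.
  rewrite -cvg_shiftS; suff -> : [sequence m n.+1]_n = arithmetic_mean (fun k => b k + g V).
    by apply: cesaro; rewrite -[X in _ --> X]add0r; exact: cvgD b_cvg (cvg_cst _).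
  by apply/funext => n; rewrite /m /arithmetic_mean /series /= big_mkord.
have mE_cvg : (m n)%:E @[n --> \oo] --> (g V)%:E by apply: cvg_EFin m_cvg; exact: nearW.
rewrite -(cvg_limn_einf_sup mE_cvg).2; apply: le_limn_esup => n.
rewrite lee_fin ler_wpM2l ?invr_ge0 // ler_sum // => tau _.
exact: u_le (ltW V_gt0).
Qed.

Lemma stable_queue_tail_bound (d : measure_display) (T : measurableType d) (R : realType) (P : probability T R)
    (U : T -> nat -> nat) (b : R^nat) (g : R -> R) :
  (forall t, nat_rv (fun w => U w t)) ->
  (forall V t, 0 <= V -> fine (P [set w | V < (U w t)%:R]) <= b t + g V) ->
  b n @[n --> \oo] --> 0 -> g V @[V --> +oo] --> 0 ->
  stable_queue P U.
Proof.
move=> mU U_tail b_cvg g_cvg; rewrite /stable_queue.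
have -> : (fun V : R => limn_esup (fun n =>
            (((n%:R)^-1)%:E * \sum_(tau < n) P [set w | (V < (U w tau)%:R)%R])%E)) =
          (fun V => limn_esup (fun n =>
            ((n%:R)^-1 * \sum_(tau < n) fine (P [set w | V < (U w tau)%:R]))%:E)).
  apply/funext => V; congr limn_esup; apply/funext => n; rewrite EFinM -sumEFin.
  congr (_ * _)%E; apply: eq_bigr => tau _; rewrite probability_fineK //.
  exact: (nat_rv_measurable (fun k => V < k%:R) (mU tau)).
apply: (@limn_esup_mean_cvg0 R (fun V t => fine (P [set w | V < (U w t)%:R])) b g) => //.
by move=> V n; exact: fine_probability_ge0.
Qed.

Section OnDemandSwitch.
Context (d : measure_display) (T : measurableType d) (R : realType) (P : probability T R).
Variables (K : nat) (p : 'I_K -> R) (lam : 'I_K -> 'I_K -> R) (de : R).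
Variables (C : T -> nat -> 'I_K -> nat) (A F : T -> nat -> 'I_K -> 'I_K -> nat).
Hypotheses (C_le1 : forall w t i, (C w t i <= 1)%N)
  (mC : forall t i, nat_rv (fun w => C w t i))
  (PC : forall t i, P [set w | C w t i = 1%N] = (p i)%:E)
  (C_indep : mutual_indep P (fun _ : 'I_K * nat => true)
     (fun k => rv_events (fun w => C w k.2 k.1)))
  (mA : forall t i j, nat_rv (fun w => A w t i j))
  (A_stat : forall i j, stationary P (fun w t => A w t i j))
  (A_avg : forall i j, {ae P, forall w, avg_cvg_to (fun t => A w t i j) (lam i j)})
  (mF : forall t i j, nat_rv (fun w => F w t i j))
  (F_od : forall w t, on_demand (sw_path (C w) (A w) (F w) t) (F w t))
  (de_gt0 : 0 < de) (slack : forall k, \sum_(m < K) lam k m < p k - de).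

Let starved k t := [set w | (cum_generated (C w) t k)%:R <= (p k - de) * t%:R :> R].
Let overloaded k t := [set w | (p k - de) * t%:R < (cum_requests (A w) t k)%:R :> R].
Let congested k t := starved k t `|` overloaded k t.

Let measurable_starved k t : measurable (starved k t).
Proof.
exact: nat_rv_measurable (fun n => n%:R <= (p k - de) * t%:R)
  (nat_rv_sum _ (fun tau : 'I_t => mC tau k)).
Qed.

Let measurable_overloaded k t : measurable (overloaded k t).
Proof.
exact: nat_rv_measurable (fun n => (p k - de) * t%:R < n%:R)
  (nat_rv_sum _ (fun tau : 'I_t => nat_rv_sum _ (fun m : 'I_K => mA tau k m))).
Qed.

Let measurable_congested k t : measurable (congested k t).
Proof. exact: measurableU. Qed.

Let C_pair k tau tau' : tau <> tau' ->
  P ([set w | C w tau k = 1%N] `&` [set w | C w tau' k = 1%N]) = (p k * p k)%:E.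
Proof.
move=> neq; rewrite (mutual_indep2 (k1 := (k, tau)) (k2 := (k, tau')) C_indep) //.
- by rewrite !PC -EFinM.
- by rewrite xpair_eqE eqxx /=; exact/eqP.
- by exists [set 1%N].
- by exists [set 1%N].
Qed.

Lemma congested_prob_cvg0 k : fine (P (congested k t)) @[t --> \oo] --> 0.
Proof.
apply: (@squeeze_cvgr _ _ _ _ (cst 0)
  (fun t => fine (P (starved k t)) + fine (P (overloaded k t)))).
- by apply: nearW => t; rewrite fine_probability_ge0 fine_probability_setU.
- exact: cvg_cst.
rewrite -[0]addr0; apply: cvgD.
  exact: (@bernoulli_sum_lower_tail_cvg0 _ _ _ P (fun tau w => C w tau k) (p k)
    (fun tau w => C_le1 w tau k) (fun tau => mC tau k) (fun tau => PC tau k) (C_pair k) _ de_gt0).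
apply: (@ae_avg_tail_cvg0 _ _ _ P (fun w t => \sum_(m < K) A w t k m)%N _ _ (slack k)).
  by move=> t; exact: nat_rv_sum.
exact: ae_avg_cvg_to_sum (fun m => A_avg k m).
Qed.

Lemma sw_U_uncongested i j t w : ~ congested i t w -> ~ congested j t w ->
  sw_U (sw_path (C w) (A w) (F w) t.+1) i j = A w t i j.
Proof.
have served k : ~ congested k t w -> (cum_requests (A w) t k < cum_generated (C w) t k)%N.
  move=> /not_orP[/negP gen_big /negP req_small]; rewrite -ltNge in gen_big.
  by rewrite -(ltr_nat R); apply: le_lt_trans gen_big; rewrite leNgt.
by move=> /served served_i /served served_j; exact: sw_U_served.
Qed.

Lemma sw_U_tail_le i j t (V : R) : 0 <= V ->
  fine (P [set w | V < (sw_U (sw_path (C w) (A w) (F w) t.+1) i j)%:R]) <=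
  fine (P (congested i t)) + fine (P (congested j t)) +
  fine (P [set w | V < (A w 0%N i j)%:R]).
Proof.
move=> V_ge0.
have [_ mU _] := nat_rv_sw_path mC mA mF t.+1.
have m_A_gt : measurable [set w | V < (A w t i j)%:R].
  exact: nat_rv_measurable (fun n => V < n%:R) (mA t i j).
have U_gt_sub : [set w | V < (sw_U (sw_path (C w) (A w) (F w) t.+1) i j)%:R] `<=`
    (congested i t `|` congested j t) `|` [set w | V < (A w t i j)%:R].
  move=> w /= V_lt; have [bad|good] := pselect ((congested i t `|` congested j t) w).
    by left.
  by right; rewrite -sw_U_uncongested // => ?; apply: good; [left | right].
apply: le_trans (le_fine_probability P _ _ U_gt_sub) _.
- exact: nat_rv_measurable (fun n => V < n%:R) (mU i j).
- by do 2?apply: measurableU.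
apply: le_trans (fine_probability_setU P _ _) _ => //; first exact: measurableU.
rewrite -(stationary_prob (fun n => V < n%:R) t (A_stat i j)) lerD2r.
exact: fine_probability_setU.
Qed.

Lemma sw_U_stable i j :
  stable_queue P (fun w t => sw_U (sw_path (C w) (A w) (F w) t) i j).
Proof.
apply: (stable_queue_tail_bound
  (b := fun t => if t is s.+1 then fine (P (congested i s)) + fine (P (congested j s)) else 0)
  (g := fun V => fine (P [set w | V < (A w 0%N i j)%:R]))).
- by move=> t; have [_ mU _] := nat_rv_sw_path mC mA mF t.
- move=> V [|t] V_ge0; last exact: sw_U_tail_le.
  rewrite (_ : [set w | _] = set0) ?measure0 ?add0r ?fine_probability_ge0 //.
  by apply/seteqP; split=> w //=; rewrite ?mulr0n ltNge V_ge0.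
- rewrite -cvg_shiftS.
  have : fine (P (congested i t)) + fine (P (congested j t)) @[t --> \oo] --> 0 + 0.
    exact: cvgD (congested_prob_cvg0 i) (congested_prob_cvg0 j).
  by rewrite addr0.
- exact: nat_rv_tail_cvg0 (mA 0%N i j).
Qed.

End OnDemandSwitch.

Lemma in_Lambda1_row_sum (R : realType) K (p : 'I_K -> R) (lam : 'I_K -> 'I_K -> R) (eps : R) :
  0 <= eps -> in_Lambda 1 p (fun i j => lam i j + eps) ->
  forall k, \sum_(m < K) lam k m + eps <= p k.
Proof.
move=> eps_ge0 [f [_ f_sym f_col f_lam]] k.
apply: le_trans (f_col k); apply: (@le_trans _ _ (\sum_(m < K) (lam k m + eps))).
  by rewrite big_split /= lerD2l (bigD1 k) //= lerDl sumr_ge0.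
by apply: ler_sum => m _; apply: le_trans (f_lam k m) _; rewrite mul1r f_sym.
Qed.

Theorem theorem5 (d : measure_display) (T : measurableType d) (R : realType)
  (P : probability T R) (K : nat)
  (p : 'I_K -> R) (lam : 'I_K -> 'I_K -> R) (Amax eps : R)
  (C : T -> nat -> 'I_K -> nat)
  (A : T -> nat -> 'I_K -> 'I_K -> nat)
  (F : T -> nat -> 'I_K -> 'I_K -> nat) :
  (* generation: C_{0i}(t) in {0,1}, Bernoulli(p_i), all mutually independent *)
  (forall w t i, (C w t i <= 1)%N) ->
  (forall t i, nat_rv (fun w => C w t i)) ->
  (forall t i, P [set w | C w t i = 1%N] = (p i)%:E) ->
  mutual_indep P (fun _ : 'I_K * nat => true)
    (fun k => rv_events (fun w => C w k.2 k.1)) ->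
  (* requests: symmetric, mutually independent across (unordered) pairs,
     each stationary ergodic with rate lam_ij *)
  (forall w t i j, A w t i j = A w t j i) ->
  (forall t i j, nat_rv (fun w => A w t i j)) ->
  mutual_indep P (fun k : 'I_K * 'I_K => (k.1 <= k.2)%N)
    (fun k => proc_events (fun w t => A w t k.1 k.2)) ->
  (forall i j, stationary P (fun w t => A w t i j)) ->
  (forall i j, ergodic P (fun w t => A w t i j)) ->
  (forall i j, (\int[P]_w ((A w 0%N i j)%:R)%:E = (lam i j)%:E)%E) ->
  (forall i j, {ae P, forall w,
     avg_cvg_to (fun t => A w t i j) (lam i j)}) ->
  (* generation and requests are independent of each other *)
  mutual_indep P (fun _ : bool => true)
    (fun b => if b then fam_events (fun i w t => C w t i)
              else fam_events (fun k : 'I_K * 'I_K => fun w t => A w t k.1 k.2)) ->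
  (* conditional second moment bound given every realization of H(t) *)
  (forall t i j w0,
     (\int[P]_(w in [set w | same_history C A F t w w0])
        (((A w t i j) ^ 2)%N%:R)%:E
      <= (Amax ^+ 2)%:E * P [set w | same_history C A F t w w0])%E) ->
  (* the protocol: measurable choices, on-demand in every slot *)
  (forall t i j, nat_rv (fun w => F w t i j)) ->
  (forall w t, on_demand (sw_path (C w) (A w) (F w) t) (F w t)) ->
  (* capacity condition with slack eps, q = 1 *)
  0 < eps ->
  in_Lambda 1 p (fun i j => lam i j + eps) ->
  forall i j,
    stable_queue P (fun w t => sw_U (sw_path (C w) (A w) (F w) t) i j).
Proof.
move=> C_le1 mC PC C_indep _ mA _ A_stat _ _ A_avg _ _ mF F_od eps_gt0 cap.
have de_gt0 : 0 < eps / 2 by rewrite divr_gt0.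
have slack k : \sum_(m < K) lam k m < p k - eps / 2.
  by have := in_Lambda1_row_sum (ltW eps_gt0) cap k; lra.
exact: sw_U_stable C_le1 mC PC C_indep mA A_stat A_avg mF F_od de_gt0 slack.
Qed.
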